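(* Let $\{C(G_n,S_n)\}_{n\ge1}$ be a family of expanders (with $G_n$ finite groups and $S_n$ symmetric subsets) of degree bounded by $d$. Let $k\ge2$ be an integer and, for each $n$, let $\sigma_{1n},\dots,\sigma_{kn}$ be pairwise commuting automorphisms of $G_n$ of order at most $2$. Let $T_n=S_n\cup\bigcup_i\sigma_{in}(S_n)\cup\bigcup_{i,j}(\sigma_{in}\circ\sigma_{jn})(S_n)\cup\cdots\cup(\sigma_{1n}\circ\sigma_{2n}\circ\cdots\circ\sigma_{kn})(S_n)$, i.e. $T_n=\bigcup_{I\subseteq\{1,\dots,k\}}(\prod_{i\in I}\sigma_{in})(S_n)$. Then: (1) for each $1\le i\le k$, the twisted Cayley graphs $\{C(G_n,T_n)^{\sigma_{in}}\}_n$ form a family of expanders of degree bounded by $2^kd$; (2) for any $1\le i,j\le k$, the eigenvalues of the adjacency operators of $C(G_n,T_n)^{\sigma_{in}}$ and $C(G_n,T_n)^{\sigma_{jn}}$ coincide up to factors of $\pm1$.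
   Context: $C(G,S)$ has vertex set $G$ and an edge from $x$ to $xs$ for each $s\in S$; for an automorphism $\tau$, $C(G,S)^\tau$ has an edge from $x$ to $\tau(xs)$. A family of expanders of degree bounded by $d$ is a sequence of finite undirected graphs of degree at most $d$, together with a constant $\varepsilon>0$ such that each graph is an $\varepsilon$-vertex expander: for every vertex set $A$ with $|A|\le|V|/2$, at least $\varepsilon|A|$ vertices outside $A$ are adjacent to some vertex of $A$. ''Up to factors of $\pm1$'' means there is a bijection between the multisets of eigenvalues under which each eigenvalue is sent to itself or its negative. *)

From HB Require Import structures.
From mathcomp Require Import all_boot all_order all_algebra all_fingroup all_field.
Set Implicit Arguments. Unset Strict Implicit. Unset Printing Implicit Defensive.
Import Order.TTheory GRing.Theory Num.Theory.

Definition out_nbhd (V : finType) (adj : rel V) (A : {set V}) : {set V} :=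
  [set y | (y \notin A) && [exists x in A, adj x y]].

Definition vertex_expander (V : finType) (adj : rel V) (eps : algC) : Prop :=
  forall A : {set V}, (2 * #|A| <= #|V|)%N ->
    (eps * (#|A|%:R) <= (#|out_nbhd adj A|%:R))%R.

Definition degree_bounded (V : finType) (adj : rel V) (d : nat) : Prop :=
  forall x : V, (#|[set y | adj x y]| <= d)%N.

Definition expander_family (V : nat -> finType) (adj : forall n, rel (V n))
    (d : nat) : Prop :=
  (forall n, degree_bounded (adj n) d) /\
  exists eps : algC, (0 < eps)%R /\ forall n, vertex_expander (adj n) eps.

(* twisted Cayley graph C(G,S)^tau: edge x -- tau(x s), s in S
   (symmetrized, so it is an undirected graph); tau = id gives C(G,S). *)
Definition cay_adj (gT : finGroupType) (tau : gT -> gT) (S : {set gT}) : rel gT :=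
  fun x y => [exists s in S, y == tau (x * s)%g] || [exists s in S, x == tau (y * s)%g].

Definition cay_adjmx (gT : finGroupType) (tau : gT -> gT) (S : {set gT})
  : 'M[algC]_#|gT| :=
  \matrix_(i, j) (#|[set s in S | tau (enum_val i * s)%g == enum_val j]|)%:R%R.

Definition comp_over (gT : Type) (k : nat) (sigma : 'I_k -> gT -> gT)
  (I : {set 'I_k}) : gT -> gT :=
  foldr (fun i f => sigma i \o f) id (enum I).

Definition Tset (gT : finGroupType) (k : nat) (sigma : 'I_k -> gT -> gT)
  (S : {set gT}) : {set gT} :=
  \bigcup_(I : {set 'I_k}) (comp_over sigma I) @: S.

Definition eigen_list (m : nat) (A : 'M[algC]_m) (s : seq algC) : Prop :=
  (char_poly A = \prod_(z <- s) ('X - z%:P))%R.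

Definition eq_up_to_sign (s1 s2 : seq algC) : Prop :=
  exists t : seq algC, size t = size s1 /\
    (forall i, (i < size s1)%N -> t`_i = s1`_i \/ t`_i = - s1`_i)%R /\
    perm_eq t s2.

Definition spectra_eq_up_to_sign (m : nat) (A B : 'M[algC]_m) : Prop :=
  forall s1 s2, eigen_list A s1 -> eigen_list B s2 -> eq_up_to_sign s1 s2.

From HB Require Import structures.
From mathcomp Require Import all_boot all_order all_algebra all_fingroup all_field.
From mathcomp Require Import zify ring.
Set Implicit Arguments. Unset Strict Implicit. Unset Printing Implicit Defensive.
Import Order.TTheory GRing.Theory Num.Theory.

(* Spectra: T is stable under every sigma_i, so two steps of C(G,T)^sigma lead
   from x to x t sigma(t') with t, t' in T, i.e. to x t t'' with t'' in T. The
   square of the adjacency matrix therefore does not depend on sigma, and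
   matrices with equal squares have the same eigenvalues up to sign.

   Expansion: degrees are at most |T| <= 2^k |S|. Let |A| <= |G|/2, let o be
   the number of outer neighbours of A in C(G,T)^sigma and A' = sigma(A). These
   neighbours contain the C(G,S)-neighbours of A' outside A and the images under
   sigma of those of A outside A', so expansion of C(G,S) gives |A :&: A'| = O(o),
   and also |A| = O(o) when |A :|: A'| <= |G|/2. Otherwise the complement of
   A :|: A' is O(o), and so is the set of vertices with a C(G,S)-neighbour on
   their own side of the cut (A, ~: A). For such a nearly bipartite cut,
   expansion makes each A Δ gA either small or co-small, so the g for which it
   is small form a subgroup H of index 2. H is sigma-stable since sigma nearly
   swaps A and ~: A, and averaging over H shows that A nearly contains or
   nearly avoids H; either way A :&: A' or the complement of A :|: A' is large
   unless A itself is O(o). *)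

Local Open Scope group_scope.

Section SymmetricDifference.
Variable T : finType.
Implicit Types X Y Z : {set T}.

Definition symd X Y := (X :\: Y) :|: (Y :\: X).

Lemma in_symd X Y x : (x \in symd X Y) = (x \in X) (+) (x \in Y).
Proof. by rewrite !inE; case: (x \in X); case: (x \in Y). Qed.

Lemma symdC X Y : symd X Y = symd Y X.
Proof. by rewrite /symd setUC. Qed.

Lemma symdxx X : symd X X = set0.
Proof. by rewrite /symd setDv setU0. Qed.

Lemma symdCC X Y : symd (~: X) (~: Y) = symd X Y.
Proof. by apply/setP => x; rewrite !in_symd !inE; case: (x \in X); case: (x \in Y). Qed.

Lemma symdCl X Y : symd (~: X) Y = ~: symd X Y.
Proof. by apply/setP => x; rewrite in_setC !in_symd in_setC; case: (x \in X); case: (x \in Y). Qed.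

Lemma setC_symd X Y : ~: symd X Y = symd X (~: Y).
Proof. by apply/setP => x; rewrite in_setC !in_symd in_setC; case: (x \in X); case: (x \in Y). Qed.

Lemma card_symd X Y : (#|symd X Y| + 2 * #|X :&: Y| = #|X| + #|Y|)%N.
Proof.
have disj : (X :\: Y) :&: (Y :\: X) = set0.
  by apply/setP => x; rewrite !inE; case: (x \in X); case: (x \in Y).
have := cardsID Y X; have := cardsID X Y.
by rewrite /symd cardsU disj cards0 subn0 setIC; lia.
Qed.

Lemma card_symdCl X Y : (#|symd (~: X) Y| + #|X| + #|Y| = #|T| + 2 * #|X :&: Y|)%N.
Proof. by have := card_symd X Y; have := cardsC (symd X Y); rewrite symdCl; lia. Qed.

Lemma card_symdC X Y : (#|symd X (~: Y)| + #|symd X Y| = #|T|)%N.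
Proof. by rewrite -setC_symd addnC cardsC. Qed.

Lemma leq_card_symd X Y Z : (#|symd X Z| <= #|symd X Y| + #|symd Y Z|)%N.
Proof.
apply: leq_trans (leq_card_setU _ _).1; apply: subset_leq_card.
by apply/subsetP => x; rewrite !inE; case: (x \in X); case: (x \in Y); case: (x \in Z).
Qed.

Lemma preimset_symd (f : T -> T) X Y :
  f @^-1: symd X Y = symd (f @^-1: X) (f @^-1: Y).
Proof. by apply/setP => x; rewrite !inE. Qed.

End SymmetricDifference.

Section Translates.
Variable gT : finGroupType.
Implicit Types (X Y Z : {set gT}) (g h : gT).

Lemma lcosetC g X : g *: ~: X = ~: (g *: X).
Proof. by apply/setP => y; rewrite inE !mem_lcoset inE. Qed.

Lemma lcoset_symd g X Y : g *: symd X Y = symd (g *: X) (g *: Y).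
Proof. by apply/setP => y; rewrite !in_symd !mem_lcoset in_symd. Qed.

Lemma card_symd_lcoset g X Y : #|symd (g *: X) (g *: Y)| = #|symd X Y|.
Proof. by rewrite -lcoset_symd card_lcoset. Qed.

Lemma leq_card_mulg X Y : (#|(X * Y)%g| <= #|X| * #|Y|)%N.
Proof.
rewrite -cardsX; apply: leq_trans (leq_imset_card (uncurry *%g) _).
apply: subset_leq_card; apply/subsetP => _ /mulsgP [x y Xx Yy ->].
by apply/imsetP; exists (x, y); rewrite ?inE ?Xx.
Qed.

Lemma almost_invariant_small_or_cosmall (H : {group gT}) Z dl :
  Z \subset H -> {in H, forall h, #|symd Z (h *: Z)| <= dl} ->
  (#|Z| <= dl) || (#|H :\: Z| <= dl).
Proof.
move=> sZH Zinv.
have cardI (A B : {set gT}) : #|A :&: B| = (\sum_(z in A) (z \in B))%N.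
  rewrite -sum1_card big_mkcond [RHS]big_mkcond; apply: eq_bigr => z _.
  by rewrite inE; case: (z \in A); case: (z \in B).
have overlap : (\sum_(h in H) #|Z :&: h *: Z| = #|Z| * #|Z|)%N.
  under eq_bigr do rewrite cardI.
  rewrite exchange_big -sum_nat_const; apply: eq_bigr => z Zz.
  have -> : (\sum_(h in H) (z \in h *: Z))%N = #|H :&: z *: Z^-1|.
    by rewrite cardI; apply: eq_bigr => h _; rewrite !mem_lcoset mem_invg invMg invgK.
  rewrite (setIidPr _) ?card_lcoset ?card_invg //.
  apply/subsetP => y; rewrite mem_lcoset mem_invg => /(subsetP sZH) Hy.
  rewrite -(mulKVg z y); apply: groupM; [exact: (subsetP sZH) | by rewrite -groupV].
have defect : (\sum_(h in H) #|symd Z (h *: Z)| <= #|H| * dl)%N.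
  by rewrite -sum_nat_const leq_sum.
have total :
    (\sum_(h in H) (#|symd Z (h *: Z)| + 2 * #|Z :&: h *: Z|) = #|H| * (2 * #|Z|))%N.
  by rewrite -sum_nat_const; apply: eq_bigr => h _; rewrite card_symd card_lcoset addnn -mul2n.
rewrite big_split /= -big_distrr /= overlap in total.
have cardH : (#|Z| + #|H :\: Z| = #|H|)%N by rewrite -(cardsID Z H) (setIidPr sZH).
have key : (2 * #|Z| * #|H :\: Z| <= #|H| * dl)%N.
  move: total defect; rewrite -cardH.
  move: (\sum_(h in H) _)%N #|Z| #|H :\: Z| => D z w; nia.
have H_gt0 : (0 < #|H|)%N := cardG_gt0 H.
case: (leqP #|Z| #|H :\: Z|) => [le|lt]; apply/orP; [left|right];
  rewrite -(leq_pmul2r H_gt0) -cardH; nia.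
Qed.

End Translates.

Section NearStabiliser.
Variables (gT : finGroupType) (X : {set gT}) (dl : nat).

Definition near_stab := [set g : gT | #|symd X (g *: X)| <= dl].

Hypothesis near_stab_gap :
  forall g, #|symd X (g *: X)| <= dl \/ (#|gT| <= #|symd X (g *: X)| + dl)%N.
Hypothesis dl_small : (3 * dl < #|gT|)%N.

Lemma near_stab_double g : (#|symd X (g *: X)| <= 2 * dl)%N -> g \in near_stab.
Proof. by rewrite inE; case: (near_stab_gap g) => //; lia. Qed.

Lemma near_stab_group : group_set near_stab.
Proof.
apply/group_setP; split; first by rewrite inE lcoset1 symdxx cards0.
move=> g h Xg Xh; apply: near_stab_double; rewrite !inE in Xg Xh.
apply: leq_trans (leq_card_symd _ (g *: X) _) _.
by rewrite lcosetM card_symd_lcoset mul2n -addnn leq_add.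
Qed.

Lemma card_symdCl_le g : g \notin near_stab -> (#|symd (~: X) (g *: X)| <= dl)%N.
Proof.
rewrite inE -ltnNge symdCl => Xg; have := cardsC (symd X (g *: X)).
by case: (near_stab_gap g) => gap; move: Xg gap; set a := #|symd X _|; set n := #|gT|; lia.
Qed.

Lemma near_stab_complement g h :
  g \notin near_stab -> h \notin near_stab -> g^-1 * h \in near_stab.
Proof.
move=> Xg Xh; apply: near_stab_double.
rewrite -(card_symd_lcoset g) -lcosetM mulKVg.
apply: leq_trans (leq_card_symd _ (~: X) _) _.
by rewrite symdC mul2n -addnn leq_add ?card_symdCl_le.
Qed.

Lemma card_near_stab : near_stab != [set: gT] -> (2 * #|near_stab| = #|gT|)%N.
Proof.
rewrite -properT => /properP [_ [g0 _ Hg0]]; pose H := Group near_stab_group.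
suff compl : ~: near_stab = g0 *: near_stab.
  by rewrite -(cardsC near_stab) compl card_lcoset addnn mul2n.
apply/setP => y; rewrite inE mem_lcoset; apply/idP/idP => [Hy|].
  exact: near_stab_complement.
apply: contraL => Hy; apply: contra Hg0 => Hgy.
have -> : g0 = y * (g0^-1 * y)^-1 by rewrite invMg invgK mulKVg.
by apply: (groupM (G := H)); rewrite // groupV.
Qed.

End NearStabiliser.

Lemma morph_invg (gT : finGroupType) (f : gT -> gT) :
  {morph f : x y / x * y} -> {morph f : x / x^-1}.
Proof.
move=> fM x; have f1 : f 1 = 1 by apply: (@mulgI _ (f 1)); rewrite -fM !mulg1.
by apply/eqP; rewrite eq_sym eq_invg_mul -fM mulgV f1.
Qed.

Section Involution.
Variables (gT : finGroupType) (sg : gT -> gT).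
Hypothesis sgK : involutive sg.
Hypothesis sgM : {morph sg : x y / x * y}.
Implicit Types (X K : {set gT}) (g : gT).

Lemma preimset_lcoset g X : sg @^-1: (g *: X) = sg g *: (sg @^-1: X).
Proof. by apply/setP => y; rewrite !inE !mem_lcoset inE sgM (morph_invg sgM) sgK. Qed.

Lemma near_stab_sg X dl g :
    (forall g, #|symd X (g *: X)| <= dl \/ (#|gT| <= #|symd X (g *: X)| + dl)%N) ->
    (2 * #|symd (~: X) (sg @^-1: X)| + 2 * dl < #|gT|)%N ->
  g \in near_stab X dl -> sg g \in near_stab X dl.
Proof.
move=> gap r_small; rewrite !inE => Xg; case: (gap (sg g)) => // far.
have : (#|symd X (sg g *: X)| <= 2 * #|symd (~: X) (sg @^-1: X)| + dl)%N.
  rewrite -symdCC -lcosetC.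
  apply: leq_trans (leq_card_symd _ (sg @^-1: X) _) _.
  apply: leq_trans (leq_add (leqnn _) (leq_card_symd _ (sg g *: (sg @^-1: X)) _)) _.
  rewrite card_symd_lcoset -preimset_lcoset -preimset_symd.
  rewrite card_preimset; last exact: inv_inj.
  by rewrite (symdC (sg @^-1: X)); move: Xg; set r := #|symd _ _|; lia.
by move: far r_small; set r := #|symd (~: X) _|; set n := #|gT|; lia.
Qed.

Lemma leq_card_stable K A : (forall y, (sg y \in K) = (y \in K)) ->
  (#|K| <= 2 * #|K :\: A| + #|A :&: sg @^-1: A|)%N.
Proof.
move=> Kstab.
have -> : (2 * #|K :\: A| = #|K :\: A| + #|K :\: sg @^-1: A|)%N.
  rewrite mul2n -addnn -(card_preimset _ (inv_inj sgK)); congr (_ + _)%N.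
  by apply: eq_card => y; rewrite !inE Kstab.
apply: (@leq_trans #|(K :\: A) :|: (K :\: sg @^-1: A) :|: (A :&: sg @^-1: A)|).
  apply/subset_leq_card/subsetP => y Ky; rewrite !inE Ky.
  by case: (y \in A); case: (sg y \in A).
apply: leq_trans (leq_card_setU _ _).1 _.
by rewrite leq_add2r (leq_card_setU _ _).1.
Qed.

End Involution.

Section CayleyBoundary.
Variables (gT : finGroupType) (S : {set gT}).
Implicit Types (X Y : {set gT}) (g : gT).

Definition bdry X := X * S :\: X.

Definition noncut_ends X := (X * S :&: X) :|: ((~: X) * S :&: ~: X).

Lemma mem_mulS X x y : x \in X -> x^-1 * y \in S -> y \in X * S.
Proof. by move=> Xx Sxy; rewrite -(mulKVg x y) mem_mulg. Qed.

Lemma noncut_endsC X : noncut_ends (~: X) = noncut_ends X.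
Proof. by rewrite /noncut_ends setCK setUC. Qed.

Lemma noncut_ends_lcoset g X : noncut_ends (g *: X) = g *: noncut_ends X.
Proof.
rewrite /noncut_ends -lcosetC -!mulgA.
by apply/setP => y; rewrite !(in_setU, in_setI, mem_lcoset).
Qed.

Lemma bdry_symd X Y : bdry (symd X Y) \subset noncut_ends X :|: noncut_ends Y.
Proof.
apply/subsetP => _ /setDP [/mulsgP [x s xXY Ss ->] xsXY].
have XS (Z : {set gT}) : (x \in Z) ==> (x * s \in Z * S) by apply/implyP => Zx; apply: mem_mulg.
move: xXY xsXY (XS X) (XS (~: X)) (XS Y) (XS (~: Y)).
rewrite !in_symd /noncut_ends !(in_setU, in_setI, in_setC).
by case: (x \in X); case: (x \in Y); case: (x * s \in X); case: (x * s \in Y);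
   case: (x * s \in X * S); case: (x * s \in (~: X) * S);
   case: (x * s \in Y * S); case: (x * s \in (~: Y) * S).
Qed.

Lemma bdryU X Y : bdry (X :|: Y) \subset (X * S :\: Y) :|: (Y * S :\: X).
Proof.
apply/subsetP => _ /setDP [/mulsgP [x s xXY Ss ->] xsXY].
have XS (Z : {set gT}) : (x \in Z) ==> (x * s \in Z * S) by apply/implyP => Zx; apply: mem_mulg.
move: xXY xsXY (XS X) (XS Y); rewrite !(in_setU, in_setD).
by case: (x \in X); case: (x \in Y); case: (x * s \in X); case: (x * s \in Y);
   case: (x * s \in X * S); case: (x * s \in Y * S).
Qed.

Lemma bdryI X Y : bdry (X :&: Y) \subset (X * S :\: Y) :|: (Y * S :\: X).
Proof.
apply/subsetP => _ /setDP [/mulsgP [x s xXY Ss ->] xsXY].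
have XS (Z : {set gT}) : (x \in Z) ==> (x * s \in Z * S) by apply/implyP => Zx; apply: mem_mulg.
move: xXY xsXY (XS X) (XS Y); rewrite !(in_setU, in_setD, in_setI).
by case: (x \in X); case: (x \in Y); case: (x * s \in X); case: (x * s \in Y);
   case: (x * s \in X * S); case: (x * s \in Y * S).
Qed.

Lemma noncut_ends_sub X Y (C := ~: (X :|: Y)) : noncut_ends X \subset
  ((X * S :\: Y) :|: (Y * S :\: X)) :|: (X :&: Y) :|: C :|: bdry C.
Proof.
apply/subsetP => y; rewrite !(in_setU, in_setI, in_setD) => /orP [/andP [XSy Xy]|].
  by rewrite XSy Xy; case: (y \in Y).
case/andP => /mulsgP [x s Xx Ss ->] Xxs.
have XS (Z : {set gT}) : (x \in Z) ==> (x * s \in Z * S) by apply/implyP => Zx; apply: mem_mulg.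
move: Xx Xxs (XS Y) (XS C); rewrite /C !(in_setC, in_setU).
by case: (x \in X); case: (x \in Y); case: (x * s \in X); case: (x * s \in Y);
   case: (x * s \in X * S); case: (x * s \in Y * S); case: (x * s \in ~: (X :|: Y) * S).
Qed.

Hypothesis Ssym : forall s, s \in S -> s^-1 \in S.

Lemma bdryC X : bdry (~: X) \subset bdry X * S.
Proof.
apply/subsetP => _ /setDP [/mulsgP [x s xX Ss ->]]; rewrite !inE negbK => xsX.
apply: mem_mulg => //; rewrite inE -in_setC xX.
by apply: (mem_mulS xsX); rewrite invMg mulgKV Ssym.
Qed.

End CayleyBoundary.

Section CayleyExpansion.
Variables (gT : finGroupType) (S : {set gT}) (M : nat).
Hypothesis expanding :
  forall X : {set gT}, (2 * #|X| <= #|gT|)%N -> (#|X| <= M * #|bdry S X|)%N.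
Implicit Types (X E : {set gT}) (g : gT).

Lemma expander_dichotomy X E : bdry S X \subset E -> bdry S (~: X) \subset E ->
  (#|X| <= M * #|E|)%N \/ (#|gT| <= #|X| + M * #|E|)%N.
Proof.
move=> XE XcE; have := cardsC X.
case: (leqP (2 * #|X|) #|gT|) => [small _|big cardX].
  by left; apply: leq_trans (expanding small) _; rewrite leq_mul2l subset_leq_card ?orbT.
have /expanding : (2 * #|~: X| <= #|gT|)%N by move: big cardX; set n := #|gT|; lia.
move=> bound; have XcE_le : (M * #|bdry S (~: X)| <= M * #|E|)%N.
  by rewrite leq_mul2l subset_leq_card ?orbT.
by right; move: (leq_trans bound XcE_le) cardX; set n := #|gT|; lia.
Qed.

Lemma near_stab_gap_noncut X g (dl := (M * (2 * #|noncut_ends S X|))%N) :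
  (#|symd X (g *: X)| <= dl)%N \/ (#|gT| <= #|symd X (g *: X)| + dl)%N.
Proof.
set E := noncut_ends S X :|: g *: noncut_ends S X.
have cardE : (M * #|E| <= dl)%N.
  rewrite leq_mul2l mul2n -addnn -{2}(card_lcoset (noncut_ends S X) g).
  by rewrite (leq_card_setU _ _).1 orbT.
have sub1 : bdry S (symd X (g *: X)) \subset E.
  by rewrite /E -noncut_ends_lcoset bdry_symd.
have sub2 : bdry S (~: symd X (g *: X)) \subset E.
  by rewrite setC_symd /E -noncut_ends_lcoset -(noncut_endsC S (g *: X)) bdry_symd.
case: (expander_dichotomy sub1 sub2) => bound; [left | right].
  exact: leq_trans bound cardE.
by apply: leq_trans bound _; rewrite leq_add2l.
Qed.

Section Twisted.
Variable sg : gT -> gT.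
Hypothesis sgK : involutive sg.
Hypothesis sgM : {morph sg : x y / x * y}.

(* A cut with few non-crossing edges that sigma nearly reverses has a small side. *)
Lemma near_bipartite_bound (A : {set gT}) : (2 * #|A| <= #|gT|)%N ->
  (#|A| <= #|symd (~: A) (sg @^-1: A)| + 2 * (M * (2 * #|noncut_ends S A|)))%N.
Proof.
move=> hA; set r := #|symd _ _|; set dl := (M * _)%N.
set n := #|gT| in hA *; set a := #|A| in hA *.
have gap := near_stab_gap_noncut A.
have [dl_big|dl_small] := leqP n (3 * dl); first lia.
have [r_big|r_small] := leqP n (2 * r + 2 * dl); first lia.
have [|A_big] := leqP #|A| dl; first lia.
set N := near_stab A dl; pose H : {group gT} := Group (near_stab_group gap dl_small).
have N_proper : N != [set: gT].
  apply: contraTneq A_big => NT; rewrite -leqNgt.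
  have Ainv : {in [set: gT]%G, forall h, (#|symd A (h *: A)| <= dl)%N}.
    by move=> h _; have := in_setT h; rewrite -NT inE.
  case/orP: (almost_invariant_small_or_cosmall (subsetT A) Ainv) => //.
  by rewrite setTD; have := cardsC A; rewrite -/n -/a; set c := #|~: A|; lia.
have cardN : (2 * #|N| = n)%N := card_near_stab gap dl_small N_proper.
have Nsg y : (sg y \in N) = (y \in N).
  apply/idP/idP => [|]; last exact: near_stab_sg.
  by move/(near_stab_sg sgK sgM gap r_small); rewrite sgK.
have NCsg y : (sg y \in ~: N) = (y \in ~: N) by rewrite !in_setC Nsg.
have NAinv : {in H, forall h, (#|symd (N :&: A) (h *: (N :&: A))| <= dl)%N}.
  move=> h Nh; have := Nh; rewrite inE; apply: leq_trans; apply/subset_leq_card/subsetP => y.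
  by rewrite !(in_symd, mem_lcoset, in_setI) (groupMl _ (groupVr Nh)); case: (y \in N).
have cardA' : #|sg @^-1: A| = #|A| := card_preimset _ (inv_inj sgK).
have := card_symdCl A (sg @^-1: A); rewrite cardA' -/r -/n.
set I := #|A :&: _|; set ZN := #|N :\: A|.
case/orP: (almost_invariant_small_or_cosmall (subsetIl H A) NAinv) => small.
  have := leq_card_stable sgK A NCsg; have := cardsID A (~: N).
  have := cardsID N A; rewrite setDE [A :&: N]setIC [A :&: ~: N]setIC.
  have := cardsC N; rewrite -/n -/a -/I.
  by move: small; set Z := #|N :&: A|; set Zc := #|~: N :&: A|; set C := #|~: N|; lia.
move: small; rewrite setDIr setDv set0U -/ZN.
by have := leq_card_stable sgK A Nsg; rewrite -/n -/a -/I -/ZN; lia.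
Qed.

Hypothesis Ssym : forall s, s \in S -> s^-1 \in S.

Lemma twisted_out_nbhd_sub (A : {set gT}) :
  (sg @^-1: (A * S) :\: A) :|: ((sg @^-1: A) * S :\: A)
    \subset out_nbhd (cay_adj sg S) A.
Proof.
apply/subsetP => y /setUP [] /setDP [+ yA]; rewrite /out_nbhd inE yA /=.
  rewrite inE => /mulsgP [a s Aa Ss sgy]; apply/exists_inP; exists a => //.
  by apply/orP; left; apply/exists_inP; exists s => //; rewrite -sgy sgK.
move=> /mulsgP [x s A'x Ss ->]; apply/exists_inP; exists (sg x); first by rewrite inE in A'x.
apply/orP; right; apply/exists_inP; exists s^-1; first exact: Ssym.
by rewrite mulgK.
Qed.

Lemma card_twisted_defect (A : {set gT}) :
  #|(A * S :\: sg @^-1: A) :|: ((sg @^-1: A) * S :\: A)|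
    <= (2 * #|out_nbhd (cay_adj sg S) A|)%N.
Proof.
set A' := sg @^-1: A; have /subUsetP [sub1 sub2] := twisted_out_nbhd_sub A.
rewrite mul2n -addnn; apply: leq_trans (leq_card_setU _ _).1 _; apply: leq_add.
  rewrite -[#|_ :\: A'|](card_preimset _ (inv_inj sgK)).
  have -> : sg @^-1: (A * S :\: A') = sg @^-1: (A * S) :\: A.
    by apply/setP => y; rewrite !inE sgK.
  exact: subset_leq_card sub1.
exact: subset_leq_card sub2.
Qed.

Lemma card_setI_preim_le (A : {set gT}) : (2 * #|A| <= #|gT|)%N ->
  (#|A :&: sg @^-1: A| <= M * (2 * #|out_nbhd (cay_adj sg S) A|))%N.
Proof.
move=> hA; have /expanding : (2 * #|A :&: sg @^-1: A| <= #|gT|)%N.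
  by apply: leq_trans hA; rewrite leq_mul2l subset_leq_card ?subsetIl ?orbT.
move/leq_trans; apply; rewrite leq_mul2l; apply/orP; right.
exact: leq_trans (subset_leq_card (bdryI _ _ _)) (card_twisted_defect A).
Qed.

Lemma card_bdry_setU_preim_le (A : {set gT}) :
  (#|bdry S (A :|: sg @^-1: A)| <= 2 * #|out_nbhd (cay_adj sg S) A|)%N.
Proof. exact: leq_trans (subset_leq_card (bdryU _ _ _)) (card_twisted_defect A). Qed.

Variable d : nat.
Hypothesis Sd : (#|S| <= d)%N.

Lemma twisted_expanding (A : {set gT}) : (2 * #|A| <= #|gT|)%N ->
  (#|A| <= 36 * (M.+1 ^ 2 * d.+1) * #|out_nbhd (cay_adj sg S) A|)%N.
Proof.
move=> hA; set o := #|out_nbhd _ A|; set A' := sg @^-1: A.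
set I := A :&: A'; set B := A :|: A'.
have cardI : (#|I| <= M * (2 * o))%N := card_setI_preim_le hA.
have cardbdB : (#|bdry S B| <= 2 * o)%N := card_bdry_setU_preim_le A.
have [Bsmall|Bbig] := leqP (2 * #|B|) #|gT|.
  have : (#|A| <= M * (2 * o))%N.
    apply: leq_trans (subset_leq_card (subsetUl A A')) _.
    by apply: leq_trans (expanding Bsmall) _; rewrite leq_mul2l cardbdB orbT.
  move/leq_trans; apply; nia.
set C := ~: B.
have cardbdC : (#|bdry S C| <= 2 * o * d)%N.
  apply: leq_trans (subset_leq_card (bdryC Ssym B)) _.
  exact: leq_trans (leq_card_mulg _ _) (leq_mul cardbdB Sd).
have cardC : (#|C| <= M * (2 * o * d))%N.
  have /expanding : (2 * #|C| <= #|gT|)%N.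
    by move: Bbig; have := cardsC B; rewrite -/C; set n := #|gT|; lia.
  by move/leq_trans; apply; rewrite leq_mul2l cardbdC orbT.
have cardJ : (#|noncut_ends S A| <= 2 * o + #|I| + #|C| + #|bdry S C|)%N.
  apply: leq_trans (subset_leq_card (noncut_ends_sub S A A')) _.
  have := card_twisted_defect A; rewrite -/A' -/o => cardF.
  by do 3 (apply: leq_trans (leq_card_setU _ _).1 _; apply: leq_add => //).
have cardr : (#|symd (~: A) A'| <= #|I| + #|C|)%N.
  have -> : symd (~: A) A' = I :|: C.
    by apply/setP => y; rewrite in_symd !inE; case: (y \in A); case: (sg y \in A).
  exact: (leq_card_setU _ _).1.
have := near_bipartite_bound hA; rewrite -/A'.
set P := (M.+1 * d.+1 * o)%N.
have cardI' : (#|I| <= 2 * P)%N by apply: leq_trans cardI _; rewrite /P; nia.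
have cardC' : (#|C| <= 2 * P)%N by apply: leq_trans cardC _; rewrite /P; nia.
have cardbdC' : (#|bdry S C| <= 2 * P)%N by apply: leq_trans cardbdC _; rewrite /P; nia.
have cardo : (2 * o <= 2 * P)%N by rewrite /P; nia.
have cardJ' : (M * (2 * #|noncut_ends S A|) <= M * (16 * P))%N.
  by rewrite leq_mul2l; apply/orP; right; lia.
have -> : (36 * (M.+1 ^ 2 * d.+1) * o = 36 * (M.+1 * P))%N by rewrite /P; ring.
nia.
Qed.

End Twisted.

End CayleyExpansion.

Section SubsetClosure.
Variables (gT : finGroupType) (k : nat) (sg : 'I_k -> gT -> gT).
Hypothesis sgK : forall i, involutive (sg i).
Hypothesis sgC : forall i j x, sg i (sg j x) = sg j (sg i x).
Hypothesis sgM : forall i, {morph sg i : x y / x * y}.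

Definition comp_seq (l : seq 'I_k) : gT -> gT := foldr (fun i f => sg i \o f) id l.

Lemma comp_overE (I : {set 'I_k}) : comp_over sg I = comp_seq (enum I).
Proof. by []. Qed.

Lemma comp_seq_rem l i x : i \in l -> comp_seq l x = sg i (comp_seq (rem i l) x).
Proof.
elim: l => [|j l IHl] //=; rewrite inE.
by case: (eqVneq j i) => [->|ne] //= /IHl ->; rewrite sgC.
Qed.

Lemma comp_seq_perm l l' : perm_eq l l' -> comp_seq l =1 comp_seq l'.
Proof.
elim: l l' => [|i l IHl] l' eq_ll' x.
  by have := perm_size eq_ll'; case: l' {eq_ll'}.
have l'i : i \in l' by rewrite -(perm_mem eq_ll') mem_head.
rewrite (comp_seq_rem x l'i) /=; congr (sg i _); apply: IHl.
by rewrite -(perm_cons i) (perm_trans eq_ll') // perm_to_rem.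
Qed.

Lemma comp_seq_morph l : {morph comp_seq l : x y / x * y}.
Proof. by elim: l => [|i l IHl] x y //=; rewrite IHl sgM. Qed.

Lemma sg_comp_over I i x : exists J, sg i (comp_over sg I x) = comp_over sg J x.
Proof.
rewrite comp_overE; have [Ii|Ini] := boolP (i \in I).
  exists (I :\ i); rewrite (comp_seq_rem x (_ : i \in enum I)) ?mem_enum // sgK.
  apply: comp_seq_perm; apply: uniq_perm; rewrite ?rem_uniq ?enum_uniq // => j.
  by rewrite mem_rem_uniq ?enum_uniq // !inE !mem_enum /= in_setD1.
exists (i |: I); rewrite comp_overE (comp_seq_rem x (_ : i \in enum (i |: I))).
  congr (sg i _); apply: comp_seq_perm; apply: uniq_perm; rewrite ?rem_uniq ?enum_uniq // => j.
  rewrite mem_rem_uniq ?enum_uniq // !inE !mem_enum /= in_setU1.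
  by case: eqP => [->|]; rewrite ?(negbTE Ini) ?andbF ?andbT.
by rewrite mem_enum setU11.
Qed.

Variable S : {set gT}.

Lemma TsetP x : reflect (exists I, exists2 s, s \in S & x = comp_over sg I s) (x \in Tset sg S).
Proof.
apply: (iffP bigcupP) => [[I _ /imsetP [s Ss ->]]|[I [s Ss ->]]]; first by exists I, s.
by exists I => //; apply: imset_f.
Qed.

Lemma Tset_sg i x : x \in Tset sg S -> sg i x \in Tset sg S.
Proof.
case/TsetP => I [s Ss ->]; have [J ->] := sg_comp_over I i s.
by apply/TsetP; exists J, s.
Qed.

Lemma mem_Tset_sg i x : (sg i x \in Tset sg S) = (x \in Tset sg S).
Proof. by apply/idP/idP => /(Tset_sg i); rewrite ?sgK. Qed.

Lemma Tset_inv : (forall s, s \in S -> s^-1 \in S) ->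
  forall x, x \in Tset sg S -> x^-1 \in Tset sg S.
Proof.
move=> Ssym x /TsetP [I [s Ss ->]]; apply/TsetP; exists I, s^-1; first exact: Ssym.
by rewrite comp_overE (morph_invg (@comp_seq_morph _)).
Qed.

Lemma S_sub_Tset : S \subset Tset sg S.
Proof.
apply/subsetP => s Ss; apply/TsetP; exists set0, s => //.
by rewrite comp_overE enum_set0.
Qed.

Lemma card_Tset : (#|Tset sg S| <= 2 ^ k * #|S|)%N.
Proof.
have -> : (2 ^ k = #|{set 'I_k}|)%N.
  by rewrite -cardsT -powersetT card_powerset cardsT card_ord.
rewrite -sum_nat_const /Tset.
elim/big_rec2: _ => [|I n T _ leTn]; first by rewrite cards0.
by apply: leq_trans (leq_card_setU _ _).1 _; rewrite leq_add ?leq_imset_card.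
Qed.

End SubsetClosure.

Local Close Scope group_scope.

Section AdjacencySquare.
Variables (gT : finGroupType) (sg : gT -> gT) (T : {set gT}).
Hypothesis sgK : involutive sg.
Hypothesis sgM : {morph sg : x y / (x * y)%g}.
Hypothesis sgT : forall x, (sg x \in T) = (x \in T).
Local Open Scope ring_scope.

Lemma cay_adjmxE i j :
  cay_adjmx sg T i j = ((((enum_val i)^-1 * sg (enum_val j))%g \in T) : nat)%:R.
Proof.
rewrite mxE; congr (_%:R); set z := ((enum_val i)^-1 * sg (enum_val j))%g.
have -> : [set s in T | sg (enum_val i * s)%g == enum_val j] = T :&: [set z].
  apply/setP => s; rewrite !inE -{1}(sgK (enum_val j)) (inj_eq (can_inj sgK)).
  by rewrite (can2_eq (mulKg _) (mulKVg _)).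
have [Tz|Tnz] := boolP (z \in T); first by rewrite (setIidPr _) ?sub1set // cards1.
rewrite (_ : _ :&: _ = set0) ?cards0 //.
by apply/setP => s; rewrite !inE andbC; case: eqP => // ->; rewrite (negbTE Tnz).
Qed.

Lemma cay_adjmx_sqrE :
  cay_adjmx sg T *m cay_adjmx sg T =
  \matrix_(i, j) \sum_(z : gT) ((((enum_val i)^-1 * z)%g \in T) : nat)%:R *
                               ((((z^-1 * enum_val j)%g \in T) : nat)%:R : algC).
Proof.
apply/matrixP => i j; rewrite !mxE.
under eq_bigr do rewrite !cay_adjmxE.
rewrite -(big_enum_val (A := gT) (fun y => ((((enum_val i)^-1 * sg y)%g \in T) : nat)%:R *
   ((((y^-1 * sg (enum_val j))%g \in T) : nat)%:R : algC))) /=.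
rewrite (reindex_inj (can_inj sgK)) /=; apply: eq_bigr => z _.
by rewrite sgK -(sgT (z^-1 * enum_val j)%g) sgM (morph_invg sgM).
Qed.

End AdjacencySquare.

Lemma cay_adjmx_sqr (gT : finGroupType) (sg : gT -> gT) (T : {set gT}) :
    involutive sg -> {morph sg : x y / (x * y)%g} -> (forall x, (sg x \in T) = (x \in T)) ->
  (cay_adjmx sg T *m cay_adjmx sg T = cay_adjmx id T *m cay_adjmx id T)%R.
Proof. by move=> sgK sgM sgT; rewrite !cay_adjmx_sqrE. Qed.

Lemma perm_map_lift (T U : eqType) (x0 : T) (f : T -> U) (s1 s2 : seq T) :
  perm_eq (map f s1) (map f s2) ->
  exists2 t : seq T, size t = size s1 /\
    (forall i, i < size s1 -> f (nth x0 t i) = f (nth x0 s1 i)) & perm_eq t s2.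
Proof.
elim: s1 s2 => [|a s1 IHs] s2 eq_s12.
  by exists [::] => //; have := perm_size eq_s12; rewrite size_map; case: s2 {eq_s12}.
have /mapP [b s2b fab] : f a \in map f s2 by rewrite -(perm_mem eq_s12) mem_head.
have eq_rem : perm_eq (map f s1) (map f (rem b s2)).
  by rewrite -(perm_cons (f a)) (perm_trans eq_s12) // fab -map_cons perm_map ?perm_to_rem.
have [t [size_t ft] eq_t] := IHs _ eq_rem.
exists (b :: t); first by split=> [|[|i]] /=; rewrite ?size_t ?fab // => /ft.
by rewrite perm_sym (perm_trans (perm_to_rem s2b)) // perm_cons perm_sym.
Qed.

Section SpectrumUpToSign.
Local Open Scope ring_scope.

Lemma char_poly_sqr (R : idomainType) m (A : 'M[R]_m) (s : seq R) :
  char_poly A = \prod_(z <- s) ('X - z%:P) ->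
  char_poly (A *m A) = \prod_(z <- s) ('X - (z ^+ 2)%:P).
Proof.
move=> charA; have size_s : size s = m.
  by have := size_char_poly A; rewrite charA size_prod_XsubC => -[].
apply/eqP; rewrite -subr_eq0 -(comp_poly_eq0 _ (q := 'X^2)) ?size_polyXn //.
rewrite comp_polyB subr_eq0; apply/eqP.
have factor : char_poly (A *m A) \Po 'X^2 =
    \det (('X%:M - map_mx polyC A) *m ('X%:M + map_mx polyC A)).
  rewrite /char_poly -det_map_mx; congr (\det _); apply/matrixP => i j.
  rewrite mulmxDr !mulmxBl !mul_mx_scalar mul_scalar_mx -map_mxM scale_scalar_mx.
  rewrite addrA subrK !mxE /= rmorphB /= rmorphMn /= comp_polyX comp_polyC.
  by rewrite expr2.
have charNA : \det ('X%:M + map_mx polyC A) = (-1) ^+ m * (char_poly A \Po (- 'X)).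
  rewrite /char_poly -det_map_mx.
  have -> : map_mx (comp_poly (- 'X)) (char_poly_mx A) = - ('X%:M + map_mx polyC A).
    apply/matrixP => i j; rewrite !mxE /= rmorphB /= rmorphMn /= comp_polyX comp_polyC.
    by rewrite mulNrn opprD.
  by rewrite -[- _ as X in \det X]scaleN1r detZ signrMK.
have negX : (-1) ^+ size s * \prod_(z <- s) (- 'X - z%:P) = \prod_(z <- s) ('X + z%:P).
  elim: (s) => [|z s' IHs]; first by rewrite !big_nil expr0 mulr1.
  by rewrite !big_cons /= exprS -IHs; ring.
rewrite factor det_mulmx charNA {1}/char_poly -/(char_poly A) charA rmorph_prod /=.
under [X in _ * (_ * X)]eq_bigr do rewrite comp_polyB comp_polyX comp_polyC.
rewrite -size_s negX rmorph_prod /= -big_split /=; apply: eq_bigr => z _.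
by rewrite comp_polyB comp_polyX comp_polyC [(z ^+ 2)%:P]rmorphXn; ring.
Qed.

Lemma spectra_eq_up_to_sign_sqr m (A B : 'M[algC]_m) :
  A *m A = B *m B -> spectra_eq_up_to_sign A B.
Proof.
move=> eqAB s1 s2 eig1 eig2.
have := char_poly_sqr eig2; rewrite -eqAB (char_poly_sqr eig1).
rewrite -!(big_map (fun z => z ^+ 2) xpredT (fun w => 'X - w%:P)).
move=> /prod_XsubC_eq/(perm_map_lift 0) [t [size_t sqr_t] eq_t].
exists t; split=> //; split=> // i /sqr_t/eqP.
by rewrite -subr_eq0 subr_sqr mulf_eq0 subr_eq0 addr_eq0 => /orP [] /eqP; [left|right].
Qed.

End SpectrumUpToSign.

Section ExpansionRatio.
Local Open Scope ring_scope.

Lemma vertex_expander_nat (eps : algC) : 0 < eps ->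
  exists M : nat, forall (V : finType) (adj : rel V), vertex_expander adj eps ->
    forall A : {set V}, (2 * #|A| <= #|V|)%N -> (#|A| <= M * #|out_nbhd adj A|)%N.
Proof.
move=> eps_gt0; exists (Num.bound eps^-1) => V adj expV A /expV.
rewrite -(ler_nat algC) natrM; set a := #|A|%:R; set o := #|_|%:R => le_eps.
apply: (@le_trans _ _ (eps^-1 * o)).
  by rewrite -(ler_pM2l eps_gt0) mulrA mulfV ?gt_eqF // mul1r.
by rewrite ler_wpM2r ?ler0n // ltW // archi_boundP // invr_ge0 ltW.
Qed.

Lemma vertex_expander_of_nat (V : finType) (adj : rel V) (K : nat) : (0 < K)%N ->
    (forall A : {set V}, (2 * #|A| <= #|V|)%N -> (#|A| <= K * #|out_nbhd adj A|)%N) ->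
  vertex_expander adj K%:R^-1.
Proof.
move=> K_gt0 expV A /expV; rewrite -(ler_nat algC) natrM => le_K.
by rewrite mulrC ler_pdivrMr ?ltr0n // mulrC.
Qed.

End ExpansionRatio.

Section CayleyGraphs.
Local Open Scope group_scope.
Variables (gT : finGroupType) (sg : gT -> gT).
Implicit Types (S T X : {set gT}).

Lemma card_le_cay_degree S d : degree_bounded (cay_adj id S) d -> (#|S| <= d)%N.
Proof.
move=> degS; apply: leq_trans (degS 1); apply/subset_leq_card/subsetP => s Ss.
by rewrite inE; apply/orP; left; apply/exists_inP; exists s; rewrite ?mul1g.
Qed.

Lemma out_nbhd_cay_id S X : (forall s, s \in S -> s^-1 \in S) ->
  out_nbhd (cay_adj id S) X = bdry S X.
Proof.
move=> Ssym; apply/setP => y; rewrite inE in_setD; congr (_ && _).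
apply/exists_inP/mulsgP => [[x Xx /orP [] /exists_inP [s Ss /eqP yx]]|[x s Xx Ss ->]].
- by exists x s.
- by exists x s^-1; rewrite ?Ssym // yx mulgK.
by exists x => //; apply/orP; left; apply/exists_inP; exists s.
Qed.

Lemma out_nbhd_cay_adjS S T X : S \subset T ->
  out_nbhd (cay_adj sg S) X \subset out_nbhd (cay_adj sg T) X.
Proof.
move=> sST; apply/subsetP => y; rewrite !inE => /andP [-> /exists_inP [x Xx adj]].
apply/exists_inP; exists x => //; move: adj => /orP [] /exists_inP [s Ss e];
  apply/orP; [left|right]; apply/exists_inP; exists s => //; exact: (subsetP sST).
Qed.

Hypothesis sgK : involutive sg.
Hypothesis sgM : {morph sg : x y / x * y}.

Lemma twisted_cay_degree T :
    (forall t, t \in T -> t^-1 \in T) -> (forall t, t \in T -> sg t \in T) ->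
  degree_bounded (cay_adj sg T) #|T|.
Proof.
move=> Tsym Tsg x; rewrite -(card_lcoset T (sg x)); apply/subset_leq_card/subsetP => y.
rewrite inE mem_lcoset => /orP [] /exists_inP [t Tt /eqP ->].
  by rewrite sgM mulKg Tsg.
by rewrite sgK invMg mulgKV Tsym.
Qed.

End CayleyGraphs.

Theorem theorem8p2 (gT : nat -> finGroupType) (S : forall n, {set gT n})
    (d k : nat) (sigma : forall n, 'I_k -> gT n -> gT n) :
  (forall n s, s \in S n -> (s^-1)%g \in S n) ->
  expander_family (fun n => cay_adj id (S n)) d ->
  (2 <= k)%N ->
  (forall n i, bijective (sigma n i)) ->
  (forall n i, {morph sigma n i : x y / (x * y)%g}) ->
  (forall n i x, sigma n i (sigma n i x) = x) ->
  (forall n i j x, sigma n i (sigma n j x) = sigma n j (sigma n i x)) ->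
  (forall i : 'I_k,
     expander_family (fun n => cay_adj (sigma n i) (Tset (sigma n) (S n))) (2 ^ k * d))
  /\
  (forall n (i j : 'I_k),
     spectra_eq_up_to_sign (cay_adjmx (sigma n i) (Tset (sigma n) (S n)))
                           (cay_adjmx (sigma n j) (Tset (sigma n) (S n)))).
Proof.
move=> Ssym [Sdeg [eps [eps_gt0 Sexp]]] _ _ sgM sgK sgC.
have Sd n : (#|S n| <= d)%N := card_le_cay_degree (Sdeg n).
split=> [i|n i j]; last first.
  by apply: spectra_eq_up_to_sign_sqr; rewrite !cay_adjmx_sqr // => x;
     rewrite (mem_Tset_sg (sgK n) (sgC n)).
split=> [n x|].
  apply: leq_trans (twisted_cay_degree (sgK n i) (sgM n i) _ _ x) _.
  - by move=> t /(Tset_inv (sgM n) (Ssym n)).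
  - by move=> t /(Tset_sg (sgK n) (sgC n) i).
  by apply: leq_trans (card_Tset _ _) _; rewrite leq_mul2l Sd orbT.
have [M expM] := vertex_expander_nat eps_gt0.
exists ((36 * (M.+1 ^ 2 * d.+1))%:R^-1)%R; split; first by rewrite invr_gt0 ltr0n.
move=> n; apply: vertex_expander_of_nat => // A hA.
have expS (X : {set gT n}) : (2 * #|X| <= #|gT n|)%N -> (#|X| <= M * #|bdry (S n) X|)%N.
  by rewrite -out_nbhd_cay_id; [exact: expM (Sexp n) X | exact: Ssym].
apply: leq_trans (twisted_expanding expS (sgK n i) (sgM n i) (Ssym n) (Sd n) hA) _.
by rewrite leq_mul2l subset_leq_card ?orbT // out_nbhd_cay_adjS // S_sub_Tset.
Qed.
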